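(* Let $0 \neq q \in \mathbb{C}$ with $q^{2} \neq 1$, let $\xi = -(1+q)^{2}/(q-q^{-1})$, and define complex numbers $\phi_{\beta}$, $\beta \in \mathbb{Z}_{+}$, recursively by $\phi_{0} = 1$, $\phi_{1} = 1$, and $\phi_{\beta} = \phi_{\beta-1} + \xi [\beta-1]_{q^{2}} \phi_{\beta-2}$ for $\beta \geq 2$. Then for each $i \in \mathbb{N}$, $$\phi_{2i} = (1-q)^{-i}\, \Psi_{2i}, \qquad \phi_{2i+1} = [2i+1]_{q}\, \phi_{2i},$$ where $$\Psi_{2i} = \frac{[4]_{q}}{[2]_{q}}\, [3]_{q}\, \frac{[8]_{q}}{[4]_{q}}\, [5]_{q}\, \frac{[12]_{q}}{[6]_{q}}\, [7]_{q} \cdots [2i-1]_{q}\, \frac{[4i]_{q}}{[2i]_{q}} = \prod_{j=1}^{i} \frac{[4j]_{q}}{[2j]_{q}} \cdot \prod_{j=1}^{i-1} [2j+1]_{q}.$$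
   Context: $\mathbb{N} = \{1,2,3,\ldots\}$ and $\mathbb{Z}_{+} = \mathbb{N}\cup\{0\}$. For $0 \neq p \in \mathbb{C}$ with $p \neq 1$ and $n \in \mathbb{Z}_{+}$: $[n]_{p} = \frac{1-p^{n}}{1-p}$; this is used with $p = q$ and $p = q^{2}$. *)

From HB Require Import structures.
From mathcomp Require Import all_boot all_order all_algebra.
From mathcomp Require Import complex Rstruct.
Set Implicit Arguments. Unset Strict Implicit. Unset Printing Implicit Defensive.
Import Order.TTheory GRing.Theory Num.Theory.
Local Open Scope ring_scope.

Definition C : Type := (Rdefinitions.R)[i].

Definition qint (p : C) (n : nat) : C := (1 - p ^+ n) / (1 - p).

Definition xi (q : C) : C := - (1 + q) ^+ 2 / (q - q^-1).

Definition Psi (q : C) (i : nat) : C :=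
  (\prod_(1 <= j < i.+1) (qint q (4 * j) / qint q (2 * j)))
  * \prod_(1 <= j < i) qint q (2 * j + 1).

(** The recurrence only mixes [phi_(b-1)] and [phi_(b-2)] with the coefficient
    [xi [b-1]_(q^2) = q [2b-2]_q / (1 - q)].  Using [[2m]_q = [m]_q (1 + q^m)]
    and [[m+1]_q = 1 + q [m]_q], a simultaneous induction shows
    [phi_(2i+1) = [2i+1]_q phi_(2i)] and
    [phi_(2i+2) = (1 + q^(2i+2)) [2i+1]_q / (1 - q) phi_(2i)].
    Unrolling the second identity gives the product formula, and
    [1 + q^(2j) = [4j]_q / [2j]_q] turns it into [Psi]. *)

From HB Require Import structures.
From mathcomp Require Import all_boot all_order all_algebra.
From mathcomp Require Import complex Rstruct.
From mathcomp Require Import ring.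
Set Implicit Arguments. Unset Strict Implicit. Unset Printing Implicit Defensive.
Import Order.TTheory GRing.Theory Num.Theory.

Local Open Scope ring_scope.

Lemma qint_double (p : C) (n : nat) : qint p (2 * n) = qint p n * (1 + p ^+ n).
Proof. by rewrite /qint mulnC exprM; ring. Qed.

Lemma qint_succ (p : C) (n : nat) : p != 1 -> qint p n.+1 = 1 + p * qint p n.
Proof.
move=> p_neq1; have p1_neq0 : 1 - p != 0 by rewrite subr_eq0 eq_sym.
by rewrite /qint exprS; field.
Qed.

Lemma qint1 (p : C) : p != 1 -> qint p 1 = 1.
Proof. by move=> p_neq1; rewrite /qint expr1 divff // subr_eq0 eq_sym. Qed.

Lemma neq1_of_sqr_neq1 (q : C) : q ^+ 2 != 1 -> q != 1.
Proof. by apply: contra => /eqP ->; rewrite expr1n. Qed.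

Lemma xi_qint_sqr (q : C) (n : nat) : q != 0 -> q ^+ 2 != 1 ->
  xi q * qint (q ^+ 2) n = q * qint q (2 * n) / (1 - q).
Proof.
move=> q_neq0 q2_neq1.
have q1_neq0 : 1 - q != 0 by rewrite subr_eq0 eq_sym neq1_of_sqr_neq1.
have q21_neq0 : 1 - q ^+ 2 != 0 by rewrite subr_eq0 eq_sym.
rewrite /xi /qint -exprM; field.
by rewrite q_neq0 q1_neq0 q21_neq0 -expr2 subr_eq0 q2_neq1.
Qed.

Section Recurrence.
Variables (q : C) (phi : nat -> C).
Hypotheses (q_neq0 : q != 0) (q2_neq1 : q ^+ 2 != 1)
  (phi0 : phi 0%N = 1) (phi1 : phi 1%N = 1)
  (phiS : forall b : nat, (2 <= b)%N ->
     phi b = phi (b - 1)%N + xi q * qint (q ^+ 2) (b - 1) * phi (b - 2)%N).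

Let q_neq1 : q != 1. Proof. exact: neq1_of_sqr_neq1. Qed.
Let q1_neq0 : 1 - q != 0. Proof. by rewrite subr_eq0 eq_sym. Qed.

Lemma phi_rec n : phi n.+2 = phi n.+1 + q * qint q (2 * n.+1) / (1 - q) * phi n.
Proof. by rewrite phiS // subn1 subn2 xi_qint_sqr. Qed.

Lemma phi_even_step i : phi (2 * i).+1 = qint q (2 * i).+1 * phi (2 * i) ->
  phi (2 * i.+1) = (1 + q ^+ (2 * i.+1)) * qint q (2 * i).+1 / (1 - q) * phi (2 * i).
Proof.
move=> phi_odd_i.
rewrite mulnS addnC addn2 phi_rec phi_odd_i qint_double !exprS.
by field.
Qed.

Lemma phi_odd i : phi (2 * i).+1 = qint q (2 * i).+1 * phi (2 * i).
Proof.
elim: i => [|i IH]; first by rewrite muln0 phi1 phi0 qint1 // mulr1.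
have := phi_even_step IH; rewrite mulnS addnC addn2 => phi_even_i.
rewrite phi_rec phi_even_i IH qint_double (qint_succ (2 * i).+2 q_neq1).
by field.
Qed.

Lemma phi_even i : phi (2 * i) =
  (1 - q) ^- i * \prod_(0 <= j < i) ((1 + q ^+ (2 * j.+1)) * qint q (2 * j).+1).
Proof.
elim: i => [|i IH]; first by rewrite big_geq // phi0 expr0 invr1 mulr1.
rewrite phi_even_step ?phi_odd // IH big_nat_recr //= exprS.
by field; rewrite q1_neq0 expf_neq0.
Qed.

End Recurrence.

Lemma prod_eq_Psi (q : C) (i : nat) : q != 1 -> (0 < i)%N ->
  (forall j : nat, (1 <= j <= i)%N -> qint q (2 * j) != 0) ->
  \prod_(0 <= j < i) ((1 + q ^+ (2 * j.+1)) * qint q (2 * j).+1) = Psi q i.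
Proof.
move=> q_neq1 i_gt0 qint_neq0; rewrite /Psi big_split /=; congr (_ * _).
  rewrite big_add1 /=; apply: eq_big_nat => j /andP[_ lt_ji].
  have -> : (4 * j.+1 = 2 * (2 * j.+1))%N by rewrite mulnA.
  by rewrite qint_double [qint q _ * _]mulrC mulfK // qint_neq0.
rewrite big_ltn // muln0 qint1 // mul1r.
by apply: eq_bigr => j _; rewrite addn1.
Qed.

Theorem lemma3 (q : C) (phi : nat -> C) :
  q != 0 -> q ^+ 2 != 1 ->
  phi 0%N = 1 -> phi 1%N = 1 ->
  (forall b : nat, (2 <= b)%N ->
     phi b = phi (b - 1)%N + xi q * qint (q ^+ 2) (b - 1) * phi (b - 2)%N) ->
  forall i : nat, (1 <= i)%N ->
    ((forall j : nat, (1 <= j <= i)%N -> qint q (2 * j) != 0) ->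
       phi (2 * i)%N = (1 - q) ^- i * Psi q i)
    /\ phi (2 * i + 1)%N = qint q (2 * i + 1) * phi (2 * i)%N.
Proof.
move=> q_neq0 q2_neq1 phi0 phi1 phiS i i_gt0; split.
  move=> qint_neq0; rewrite (phi_even q_neq0 q2_neq1 phi0 phi1 phiS).
  by rewrite (prod_eq_Psi (neq1_of_sqr_neq1 q2_neq1) i_gt0 qint_neq0).
by rewrite addn1 (phi_odd q_neq0 q2_neq1 phi0 phi1 phiS).
Qed.
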